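(* Let $X$, $Z$ be topological vector spaces, $C\subseteq Z$ a nonempty closed convex cone with $C^-\neq\{0\}$, and $f:X\to\mathcal{F}(Z,C)$. If $f$ is Hausdorff upper continuous at $x_0\in X$, then for every $z^*\in Z^*$ the scalarization $\varphi_{(f,z^* )}:X\to\overline{\mathbb{R}}$ is lower semicontinuous at $x_0$.
   Context: $\mathcal{F}(Z,C)=\{A\subseteq Z\colon A=\operatorname{cl}(A+C)\}$ (empty set included); $C^-=\{z^*\in Z^*\colon z^*(z)\le0\ \forall z\in C\}$. $\varphi_{(f,z^* )}(x)=\inf_{z\in f(x)}(-z^*(z))$, with $\inf\emptyset=+\infty$. $f$ is Hausdorff upper continuous at $x_0$ iff for every neighborhood $V$ of $0$ in $Z$ there is a neighborhood $U$ of $x_0$ with $f(x)\subseteq f(x_0)+V$ for all $x\in U$. *)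

From HB Require Import structures.
From mathcomp Require Import all_boot all_order all_algebra.
From mathcomp Require Import all_classical all_reals all_analysis.
Set Implicit Arguments. Unset Strict Implicit. Unset Printing Implicit Defensive.
Import Order.TTheory GRing.Theory Num.Theory.
Import numFieldNormedType.Exports.
Local Open Scope classical_set_scope.
Local Open Scope ring_scope.

(* Real topological vector spaces are modelled by [topologicalLmodType R]
   (topological space + R-module with continuous addition and scaling). *)

Section Defs.
Context {R : realType}.

Definition msum {Z : topologicalLmodType R} (A B : set Z) : set Z :=
  [set a + b | a in A & b in B].

Definition is_convex_cone {Z : topologicalLmodType R} (C : set Z) : Prop :=
  (forall t (c : Z), 0 <= t -> C c -> C (t *: c)) /\
  (forall (a b : Z) (t : R), C a -> C b -> 0 <= t <= 1 ->
      C (t *: a + (1 - t) *: b)).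

Definition is_dual_elt {Z : topologicalLmodType R} (zs : Z -> R) : Prop :=
  (forall (a : R) (u v : Z), zs (a *: u + v) = a * zs u + zs v) /\
  continuous zs.

Definition neg_dual_cone {Z : topologicalLmodType R} (C : set Z) :
  set (Z -> R) :=
  [set zs | is_dual_elt zs /\ forall z, C z -> zs z <= 0].

(* F(Z,C) : sets A with A = cl(A + C) (empty set included) *)
Definition in_FZC {Z : topologicalLmodType R} (C : set Z) (A : set Z) : Prop :=
  A = closure (msum A C).

Definition hausdorff_upper_continuous_at {X Z : topologicalLmodType R}
  (f : X -> set Z) (x0 : X) : Prop :=
  forall V : set Z, nbhs (0 : Z) V ->
    exists2 U : set X, nbhs x0 U & forall x, U x -> f x `<=` msum (f x0) V.

(* scalarization: phi (f, zs) x = inf over z in f x of -(zs z); inf of empty set = +oo *)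
Definition scalarization {X Z : topologicalLmodType R}
  (f : X -> set Z) (zs : Z -> R) (x : X) : \bar R :=
  ereal_inf [set (- zs z)%:E | z in f x].

Definition lower_semicontinuous_at {X : topologicalType} (g : X -> \bar R)
  (x0 : X) : Prop :=
  forall a : R, (a%:E < g x0)%E ->
    exists2 V : set X, nbhs x0 V & forall y, V y -> (a%:E < g y)%E.

End Defs.

From Pilot Require Import Defs.
From HB Require Import structures.
From mathcomp Require Import all_boot all_order all_algebra.
From mathcomp Require Import all_classical all_reals all_analysis.
From mathcomp Require Import lra.
Import Order.TTheory GRing.Theory Num.Theory.
Import numFieldNormedType.Exports.
Local Open Scope classical_set_scope.
Local Open Scope ring_scope.

(* If every point of [f x] lies within [V] of [f x0], and [z*] varies by less
   than [e] on [V], then the infimum of [-z*] over [f x] drops by at most [e]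
   below its value at [x0]; continuity of [z*] at [0] supplies such a [V]. *)

Section DualElement.
Context {R : realType} {Z : topologicalLmodType R} {zs : Z -> R}.
Hypothesis zs_dual : is_dual_elt zs.

Lemma dual_elt0 : zs 0 = 0.
Proof.
have := zs_dual.1 1 0 0; rewrite scale1r addr0 mul1r => h; lra.
Qed.

Lemma dual_eltD (u v : Z) : zs (u + v) = zs u + zs v.
Proof. by rewrite -[u]scale1r zs_dual.1 mul1r scale1r. Qed.

Lemma dual_elt_nbhs0_small (e : R) : 0 < e ->
  nbhs (0 : Z) [set v | `|zs v| < e].
Proof.
move=> e0; have : nbhs (0 : Z) (zs @^-1` ball (0 : R) e).
  by rewrite -dual_elt0; apply: zs_dual.2; exact: nbhsx_ballx.
by apply: filterS => v; rewrite /ball /= sub0r normrN.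
Qed.

(* Unqualified [msum] would be the sum of measures from the analysis library. *)
Lemma scalarization_msum_ge (A V B : set Z) (a e : R) :
  ((a + e)%:E <= ereal_inf [set (- zs z)%:E | z in A])%E ->
  (forall v, V v -> `|zs v| < e) -> B `<=` Defs.msum A V ->
  (a%:E <= ereal_inf [set (- zs z)%:E | z in B])%E.
Proof.
move=> infA smallV BAV; apply: le_ereal_inf_tmp => _ [_ /BAV[z Az [v Vv <-]] <-].
have /andP[vlo vhi] : - e < zs v < e by rewrite -ltr_norml; exact: smallV.
have : ((a + e)%:E <= (- zs z)%:E)%E.
  by apply: (le_trans infA); apply: ereal_inf_lbound; exists z.
rewrite !lee_fin dual_eltD; lra.
Qed.

End DualElement.

Lemma lte_fin_gap {R : realType} (a : R) (x : \bar R) : (a%:E < x)%E ->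
  exists2 e : R, 0 < e & ((a + e + e)%:E < x)%E.
Proof.
case: x => [r| |] //; last by move=> _; exists 1 => //; exact: ltry.
rewrite lte_fin => ar; exists ((r - a) / 3); first by rewrite divr_gt0 // subr_gt0.
rewrite lte_fin; lra.
Qed.

Theorem mainTheorem14 (R : realType) (X Z : topologicalLmodType R)
  (C : set Z) (f : X -> set Z) (x0 : X) :
  C !=set0 -> closed C -> is_convex_cone C ->
  neg_dual_cone C <> [set (fun _ : Z => 0 : R)] ->
  (forall x, in_FZC C (f x)) ->
  hausdorff_upper_continuous_at f x0 ->
  forall zs : Z -> R, is_dual_elt zs ->
    lower_semicontinuous_at (scalarization f zs) x0.
Proof.
move=> _ _ _ _ _ f_huc zs zs_dual a /lte_fin_gap[e e0 ltx0].
have [U nU fU] := f_huc _ (dual_elt_nbhs0_small zs_dual _ e0).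
exists U => // y Uy; apply: (@lt_le_trans _ _ (a + e)%:E).
  by rewrite lte_fin ltrDl.
exact: scalarization_msum_ge zs_dual _ _ _ _ _ (ltW ltx0) _ (fU y Uy).
Qed.
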